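(* Let $T$ be an ordered tree with $\ell\ge 2$ vertices. Then there is a constant $C=C(T)$ such that $r_o(T,K_n)\le C\,n^{\ell}$ for all $n\ge 1$; that is, $r_o(T,K_n)=O(n^\ell)$.
   Context: An ordered graph $G$ on $n$ vertices has vertex set $[n]=\{1,\dots,n\}$ with the natural linear order; an ordered tree is an ordered graph whose underlying graph is a tree. An ordered graph $G$ on $[n]$ is contained in an ordered graph $H$ on a linearly ordered vertex set if there is an injective map $f$ from $[n]$ to $V(H)$ with $f(i)<f(j)$ whenever $i<j$ and $f(i)f(j)\in E(H)$ whenever $ij\in E(G)$; such an image is an ordered copy of $G$. $K_n$ denotes the complete graph on $[n]$. The online ordered Ramsey game for $(G_1,G_2)$ is played by Builder and Painter on the vertex set $\mathbb N$ with its natural order. On each turn Builder selects a previously unselected pair of vertices (an edge) and Painter then colors it red or blue. Builder wins as soon as the colored edges contain an ordered red copy of $G_1$ or an ordered blue copy of $G_2$; Builder tries to minimize and Painter tries to maximize the number of turns. The online ordered Ramsey number $r_o(G_1,G_2)$ is the number of turns after which Builder wins when both players play optimally. *)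

From mathcomp Require Import all_boot.
Set Implicit Arguments. Unset Strict Implicit. Unset Printing Implicit Defensive.

(* An ordered graph on [m] is encoded on the vertex type 'I_m (vertex i+1 of the
   paper is the ordinal i), with its natural order, by an edge relation e
   (assumed symmetric and irreflexive where relevant). *)

Definition connected_graph (m : nat) (e : rel 'I_m) : Prop :=
  forall x y : 'I_m, connect e x y.

Definition acyclic_graph (m : nat) (e : rel 'I_m) : Prop :=
  forall c : seq 'I_m, uniq c -> 3 <= size c -> ~~ cycle e c.

Definition is_tree (m : nat) (e : rel 'I_m) : Prop :=
  connected_graph e /\ acyclic_graph e.

Definition complete_rel (n : nat) : rel 'I_n := fun i j => i != j.

(* A board state: the list of colored edges so far.  An edge between vertices
   a < b of N is stored as the pair (a, b); color true = red, false = blue. *)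
Definition board := seq ((nat * nat) * bool).

Definition contains_copy (m : nat) (e : rel 'I_m) (col : bool) (s : board) : Prop :=
  exists f : 'I_m -> nat,
    (forall i j : 'I_m, i < j -> f i < f j) /\
    (forall i j : 'I_m, i < j -> e i j -> ((f i, f j), col) \in s).

Definition builder_has_won (m1 : nat) (e1 : rel 'I_m1) (m2 : nat) (e2 : rel 'I_m2)
  (s : board) : Prop :=
  contains_copy e1 true s \/ contains_copy e2 false s.

(* On each turn Builder picks a previously unselected
   pair {a, b} (a < b) and Painter colors it. *)
Fixpoint builder_wins_within (m1 : nat) (e1 : rel 'I_m1) (m2 : nat) (e2 : rel 'I_m2)
  (k : nat) (s : board) : Prop :=
  builder_has_won e1 e2 s \/
  match k with
  | 0 => False
  | k'.+1 => exists a b : nat, a < b /\ (a, b) \notin map fst s /\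
              forall c : bool, builder_wins_within e1 e2 k' (rcons s ((a, b), c))
  end.

(* r_o(G1, G2) <= N  iff  Builder can force a win within N turns from the empty
   board (r_o is the least such N). *)
Definition online_ordered_ramsey_le (m1 : nat) (e1 : rel 'I_m1) (m2 : nat) (e2 : rel 'I_m2)
  (N : nat) : Prop :=
  builder_wins_within e1 e2 N [::].

From mathcomp Require Import all_boot zify.
Set Implicit Arguments. Unset Strict Implicit. Unset Printing Implicit Defensive.

(* Induction on the number of vertices, over all ordered forests.  Remove a
   vertex v of degree at most one; by induction Builder forces a red copy of
   T - v or a blue K_n within K = O(n^(l-1)) moves.  Such a strategy touches
   finitely many vertices, so it can be replayed along any increasing
   relabelling, in particular a spread-out one leaving a gap where v fits.  If
   v is isolated, any vertex of the gap completes the copy.  If v is a leaf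
   hanging from u, Builder plays n rounds, each nested inside the gap left by
   the previous one: a round builds a copy of T - v and then joins its image
   of u to the images of u of all earlier rounds.  A red edge completes an
   earlier copy, since the new vertex lies in that copy's gap; otherwise the n
   images of u span a blue K_n.  In total this takes n (K + n) = O(n^l) moves. *)

Lemma subset_rcons (T : eqType) (s : seq T) x : {subset s <= rcons s x}.
Proof. by move=> y; rewrite mem_rcons in_cons => ->; rewrite orbT. Qed.

Lemma subset_rcons2 (T : eqType) (s t : seq T) x :
  {subset s <= t} -> {subset rcons s x <= rcons t x}.
Proof. by move=> st y; rewrite !mem_rcons !in_cons => /orP [->|/st ->]; rewrite ?orbT. Qed.

Definition upward_closed (Q : board -> Prop) :=
  forall s t, {subset s <= t} -> Q s -> Q t.

Lemma contains_copy_upward m (e : rel 'I_m) col : upward_closed (contains_copy e col).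
Proof. by move=> s t st [f [fi fe]]; exists f; split=> // i j ij eij; apply/st/fe. Qed.

Lemma builder_has_won_upward m1 (e1 : rel 'I_m1) m2 (e2 : rel 'I_m2) :
  upward_closed (builder_has_won e1 e2).
Proof. by move=> s t st [H|H]; [left|right]; apply: contains_copy_upward H. Qed.

(* The game in which Builder may also select an already colored pair: such a
   move is merely wasted, so this relaxation does not help Builder
   (see [forces_builder_wins]). *)
Fixpoint forces (k : nat) (s : board) (Q : board -> Prop) : Prop :=
  Q s \/ match k with 0 => False | k'.+1 =>
    exists a b : nat, a < b /\ forall c : bool, forces k' (rcons s ((a, b), c)) Q end.

Lemma forces_now k s (Q : board -> Prop) : Q s -> forces k s Q.
Proof. by case: k; left. Qed.

Lemma forces_leq k k' s Q : k <= k' -> forces k s Q -> forces k' s Q.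
Proof.
elim: k k' s => [|k IH] [|k'] s //= kk'; case=> [HQ|]; try by left.
by case=> a [b [ab H]]; right; exists a, b; split=> // c; apply: IH (H c).
Qed.

Lemma forces_bind k k' s Q Q' : forces k s Q ->
  (forall s', {subset s <= s'} -> Q s' -> forces k' s' Q') -> forces (k + k') s Q'.
Proof.
elim: k s => [|k IH] s [HQ|HB] HQQ' //.
- exact: HQQ' _ (fun _ x => x) HQ.
- by apply: forces_leq (HQQ' _ (fun _ x => x) HQ); rewrite leq_addl.
- case: HB => a [b [ab H]]; right; exists a, b; split=> // c.
  by apply: IH (H c) _ => s' ss'; apply: HQQ' => x /subset_rcons /ss'.
Qed.

Lemma forces_weaken k s Q Q' : forces k s Q ->
  (forall s', {subset s <= s'} -> Q s' -> Q' s') -> forces k s Q'.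
Proof.
move=> HQ HQQ'; rewrite -[k]addn0; apply: forces_bind HQ _ => s' ss' /(HQQ' _ ss').
exact: forces_now.
Qed.

Lemma builder_wins_within_succ m1 (e1 : rel 'I_m1) m2 (e2 : rel 'I_m2) k s :
  builder_wins_within e1 e2 k s -> builder_wins_within e1 e2 k.+1 s.
Proof.
elim: k s => [|k IH] s /=; first by case=> // H; left.
case=> [H|[a [b [ab [nab H]]]]]; first by left.
by right; exists a, b; do 2!split=> //; move=> c; apply: IH.
Qed.

Lemma builder_wins_within_eq_mem m1 (e1 : rel 'I_m1) m2 (e2 : rel 'I_m2) k s t :
  s =i t -> builder_wins_within e1 e2 k s -> builder_wins_within e1 e2 k t.
Proof.
elim: k s t => [|k IH] s t st /=.
  by case=> // H; left; apply: builder_has_won_upward H => x; rewrite st.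
case=> [H|[a [b [ab [nab H]]]]].
  by left; apply: builder_has_won_upward H => x; rewrite st.
right; exists a, b; split=> //; split.
  by apply: contra nab => /mapP [x xt ->]; apply: map_f; rewrite st.
by move=> c; apply: IH (H c) => x; rewrite !mem_rcons !in_cons st.
Qed.

Lemma forces_builder_wins m1 (e1 : rel 'I_m1) m2 (e2 : rel 'I_m2) k s :
  forces k s (builder_has_won e1 e2) -> builder_wins_within e1 e2 k s.
Proof.
elim: k s => [|k IH] s /=; first by case=> // H; left.
case=> [H|[a [b [ab H]]]]; first by left.
case: (boolP ((a, b) \in map fst s)) => [/mapP [[ab' c] xs /= eab]|nab].
  apply/builder_wins_within_succ/(builder_wins_within_eq_mem _ (IH _ (H c))).
  by move=> x; rewrite mem_rcons in_cons eab; case: eqP => // ->.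
by right; exists a, b; do 2!split=> //; move=> c; apply: IH.
Qed.

Fixpoint forces_below (B k : nat) (s : board) (Q : board -> Prop) : Prop :=
  Q s \/ match k with 0 => False | k'.+1 =>
    exists a b : nat, a < b < B /\
      forall c : bool, forces_below B k' (rcons s ((a, b), c)) Q end.

Lemma forces_below_leq B B' k s Q :
  B <= B' -> forces_below B k s Q -> forces_below B' k s Q.
Proof.
move=> BB'; elim: k s => [|k IH] s //= [HQ|[a [b [/andP [ab bB] H]]]]; first by left.
by right; exists a, b; rewrite ab (leq_trans bB BB'); split=> // c; apply: IH.
Qed.

Lemma forces_bounded k s Q : forces k s Q -> exists B, forces_below B k s Q.
Proof.
elim: k s => [|k IH] s /=; first by case=> // H; exists 0; left.
case=> [H|[a [b [ab H]]]]; first by exists 0; left.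
have [B1 H1] := IH _ (H true); have [B2 H2] := IH _ (H false).
exists (maxn b.+1 (maxn B1 B2)); right; exists a, b; rewrite ab leq_max leqnn.
by split=> //; case; [apply: forces_below_leq H1|apply: forces_below_leq H2];
  rewrite !leq_max leqnn ?orbT.
Qed.

Definition relabel_edge (h : nat -> nat) (x : (nat * nat) * bool) : (nat * nat) * bool :=
  ((h x.1.1, h x.1.2), x.2).

Definition board_below B (t : board) := forall x, x \in t -> x.1.1 < x.1.2 < B.

Lemma forces_below_relabel (h : nat -> nat) B k t s Q : {homo h : i j / i < j} ->
  forces_below B k t Q -> board_below B t -> {subset map (relabel_edge h) t <= s} ->
  forces k s (fun s' => exists t', [/\ Q t', board_below B t' &
                                       {subset map (relabel_edge h) t' <= s'}]).
Proof.
move=> hi; elim: k t s => [|k IH] t s /=.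
  by case=> // HQ tB ts; left; exists t.
case=> [HQ|[a [b [abB H]]]] tB ts; first by left; exists t.
right; exists (h a), (h b); split; first by case/andP: abB => /hi.
move=> c; apply: IH (H c) _ _.
  by move=> x; rewrite mem_rcons in_cons => /orP [/eqP -> //|/tB].
by rewrite map_rcons; apply: subset_rcons2.
Qed.

Lemma contains_copy_relabel m (e : rel 'I_m) col (h : nat -> nat) t s :
  {homo h : i j / i < j} -> contains_copy e col t ->
  {subset map (relabel_edge h) t <= s} -> contains_copy e col s.
Proof.
move=> hi [f [fi fe]] ts; exists (h \o f); split=> [i j ij|i j ij eij].
  exact/hi/fi.
by apply: ts; apply: (map_f (relabel_edge h) (fe i j ij eij)).
Qed.

(* Vertices of the copy not covered by an edge of [t] can be moved to
   [B, B + m). *)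
Lemma contains_copy_below m (e : rel 'I_m) col t B :
  contains_copy e col t -> board_below B t ->
  exists f : 'I_m -> nat, [/\ {homo f : i j / i < j},
    forall i j : 'I_m, i < j -> e i j -> ((f i, f j), col) \in t &
    forall i : 'I_m, f i < B + m].
Proof.
move=> [f [fi fe]] tB.
exists (fun i : 'I_m => if f i < B then f i else B + i); split.
- move=> i j ij; have := fi i j ij; case: ifP; case: ifP => /= *; lia.
- move=> i j ij eij; have fij := fe i j ij eij; have /andP [/= H1 H2] := tB _ fij.
  by rewrite H2 (ltn_trans H1 H2).
- by move=> i; case: ifP => /= *; have := ltn_ord i; lia.
Qed.

Definition colored (s : board) col a b := ((minn a b, maxn a b), col) \in s.

Lemma coloredC s col a b : colored s col a b = colored s col b a.
Proof. by rewrite /colored minnC maxnC. Qed.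

Lemma coloredE s col a b : a < b -> colored s col a b = (((a, b), col) \in s).
Proof. by move=> /ltnW ab; rewrite /colored (minn_idPl ab) (maxn_idPr ab). Qed.

Lemma blue_clique_copy n (W : seq nat) s : uniq W -> size W = n ->
  {in W &, forall a b, a != b -> colored s false a b} ->
  contains_copy (@complete_rel n) false s.
Proof.
move=> uW sW Wb; set L := sort leq W.
have sL : sorted ltn L.
  by rewrite ltn_sorted_uniq_leq sort_uniq uW sort_sorted //; apply: leq_total.
have Li (i : 'I_n) : nth 0 L i \in W by rewrite -(mem_sort leq) mem_nth ?size_sort ?sW.
have Lmono : {homo (fun i : 'I_n => nth 0 L i) : i j / i < j}.
  by move=> i j; apply: (sorted_ltn_nth ltn_trans) => //; rewrite inE size_sort sW.
exists (fun i => nth 0 L i); split=> // i j ij _.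
by rewrite -coloredE ?Lmono // Wb // neq_ltn Lmono.
Qed.

Definition remove_vertex m (T : rel 'I_m.+1) (v : 'I_m.+1) : rel 'I_m :=
  fun j j' => T (lift v j) (lift v j').

Lemma contains_copy_insert m (T : rel 'I_m.+1) (v : 'I_m.+1) (g : 'I_m -> nat) x s :
  symmetric T -> {homo g : i j / i < j} ->
  (forall i j : 'I_m, i < j -> remove_vertex T v i j -> ((g i, g j), true) \in s) ->
  (forall j : 'I_m, j < v -> g j < x) -> (forall j : 'I_m, v <= j -> x < g j) ->
  (forall j : 'I_m, T v (lift v j) -> colored s true (g j) x) ->
  contains_copy T true s.
Proof.
move=> Tsym gi gE gl gr gv.
have liftE (j : 'I_m) : (lift v j : nat) = j + (v <= j) by rewrite /= /bump addnC.
exists (fun i => if unlift v i is Some j then g j else x); split=> i i';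
  case: unliftP => [j ->|->]; case: unliftP => [j' ->|->];
  rewrite ?liftE ?ltnn // => ii'.
- by apply: gi; move: ii'; case: (leqP v j); case: (leqP v j') => /= *; lia.
- by apply: gl; move: ii'; case: (leqP v j) => /= *; lia.
- by apply: gr; move: ii'; case: (leqP v j') => /= *; lia.
- by apply: gE; move: ii'; case: (leqP v j); case: (leqP v j') => /= *; lia.
- rewrite Tsym => /gv; rewrite coloredE //.
  by apply: gl; move: ii'; case: (leqP v j) => /= *; lia.
- move=> /gv; rewrite coloredC coloredE //.
  by apply: gr; move: ii'; case: (leqP v j') => /= *; lia.
Qed.

Definition scale lo S (i : nat) := lo + i.+1 * S.

Lemma scale_increasing lo S : 0 < S -> {homo scale lo S : i j / i < j}.
Proof. by rewrite /scale => S0 i j ij; nia. Qed.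

Lemma scaled_gap m (f : 'I_m -> nat) (v : nat) lo S Bm :
  {homo f : i j / i < j} -> v <= m -> (forall i, f i < Bm) ->
  exists lo', [/\ lo <= lo', lo' + S <= lo + Bm.+1 * S,
    forall j : 'I_m, j < v -> scale lo S (f j) <= lo' &
    forall j : 'I_m, v <= j -> lo' + S <= scale lo S (f j)].
Proof.
rewrite /scale => fi vm fB.
have fw (i j : 'I_m) : i <= j -> f i <= f j.
  by rewrite leq_eqVlt => /orP [/eqP/val_inj ->|/fi/ltnW].
case: v vm => [|v] vm.
  case: m f fi fB fw {vm} => [|m] f fi fB fw.
    by exists lo; split=> // [|[]//]; nia.
  exists (lo + f ord0 * S); split=> //; first lia.
    by have := fB ord0; nia.
  by move=> j _; have := fw ord0 j isT; nia.
exists (lo + (f (Ordinal vm)).+1 * S); split; first lia.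
- by have := fB (Ordinal vm); nia.
- move=> j jv; have : f j <= f (Ordinal vm) by apply: fw; rewrite /= -ltnS.
  nia.
- by move=> j jv; have := fi (Ordinal vm) j jv; nia.
Qed.

Lemma scaled_copy_extends m (T : rel 'I_m.+1) (v : 'I_m.+1) (f : 'I_m -> nat)
    lo S Bm (s : board) :
  symmetric T -> 0 < S -> {homo f : i j / i < j} -> (forall i, f i < Bm) ->
  (forall i j : 'I_m, i < j -> remove_vertex T v i j ->
     ((scale lo S (f i), scale lo S (f j)), true) \in s) ->
  exists lo', [/\ lo <= lo', lo' + S <= lo + Bm.+1 * S,
    forall j, ~~ (lo' < scale lo S (f j) < lo' + S) &
    forall x (s' : board), lo' < x < lo' + S -> {subset s <= s'} ->
      (forall j, T v (lift v j) -> colored s' true (scale lo S (f j)) x) ->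
      contains_copy T true s'].
Proof.
move=> Tsym S0 fi fB fE; have vm : v <= m by rewrite -ltnS.
have [lo' [lolo' lo'B left right]] := scaled_gap lo S fi vm fB.
exists lo'; split=> // [j|x s' /andP [lo'x xS] ss' vx].
  by case: (ltnP j v) => [/left|/right]; apply: contraL => /andP [] *; lia.
apply: (contains_copy_insert Tsym _ _ _ _ vx).
- by move=> i j /fi /(scale_increasing lo S0).
- by move=> i j ij eij; apply/ss'/fE.
- by move=> j /left; lia.
- by move=> j /right; lia.
Qed.

Lemma forces_scaled_copy m (e : rel 'I_m) n B K lo S (s : board) : 0 < S ->
  forces_below B K [::] (builder_has_won e (@complete_rel n)) ->
  forces K s (fun s' => contains_copy (@complete_rel n) false s' \/
    exists f : 'I_m -> nat, [/\ {homo f : i j / i < j}, forall i, f i < B + m &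
      forall i j : 'I_m, i < j -> e i j ->
        ((scale lo S (f i), scale lo S (f j)), true) \in s']).
Proof.
move=> S0 HB; have hi := scale_increasing lo S0.
apply: forces_weaken (forces_below_relabel hi HB _ _) _ => // s' _.
case=> t' [[red|blue] t'B t's']; last by left; apply: contains_copy_relabel blue t's'.
right; have [f [fi fE fB]] := contains_copy_below red t'B.
by exists f; split=> // i j ij eij; apply/t's'/(map_f (relabel_edge _) (fE i j ij eij)).
Qed.

Lemma forces_query_star (Q : board -> Prop) w (L : seq nat) (s : board) : w \notin L ->
  (forall w' (s' : board), w' \in L -> {subset s <= s'} -> colored s' true w w' -> Q s') ->
  forces (size L) s (fun s' => Q s' \/ {in L, forall w', colored s' false w w'}).
Proof.
elim: L s => [|w' L IH] s /=; first by left; right.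
rewrite in_cons negb_or eq_sym => /andP [w'w wL] red.
right; exists (minn w w'), (maxn w w'); split; first by move: w'w => /eqP; lia.
case.
  apply/forces_now; left; apply: (red w'); first exact: mem_head.
    exact: subset_rcons.
  by rewrite /colored mem_rcons mem_head.
apply: forces_weaken (IH _ wL _) _.
  by move=> w0 s' w0L ss'; apply: red; rewrite ?in_cons ?w0L ?orbT // => x /subset_rcons /ss'.
move=> s' ss' [HQ|blue]; [by left|right] => w0; rewrite in_cons => /orP [/eqP ->|/blue //].
by apply: ss'; rewrite mem_rcons mem_head.
Qed.

Lemma acyclic_remove_vertex m (T : rel 'I_m.+1) (v : 'I_m.+1) :
  acyclic_graph T -> acyclic_graph (remove_vertex T v).
Proof.
move=> Ta c uc sc; have := Ta (map (lift v) c).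
by rewrite map_inj_uniq ?size_map ?cycle_map //; [apply|apply: lift_inj].
Qed.

(* Extending a path greedily terminates, since a duplicate-free path has at
   most [m.+1] vertices. *)
Lemma exists_maximal_path m (T : rel 'I_m.+1) :
  exists x q, [/\ uniq (x :: q), path T x q & forall y, T (last x q) y -> y \in x :: q].
Proof.
suff extend d x q : uniq (x :: q) -> path T x q -> m.+1 - size (x :: q) <= d ->
    exists x' q', [/\ uniq (x' :: q'), path T x' q' &
                      forall y, T (last x' q') y -> y \in x' :: q'].
  by apply: (extend m ord0 [::]) => //=; rewrite subn1.
elim: d x q => [|d IH] x q uq pq sd;
  case: (pickP (fun y => T (last x q) y && (y \notin x :: q))) =>
    [y /andP [Ty ny]|maximal]; try by exists x, q; split=> // y Ty;
      move: (maximal y); rewrite Ty /= => /negbT; rewrite negbK.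
  have /card_uniqP /= card_yxq : uniq (y :: x :: q) by rewrite [uniq _]/= ny.
  have := max_card (mem (y :: x :: q)); rewrite card_yxq card_ord.
  by move: sd => /=; lia.
apply: (IH x (rcons q y)); first by rewrite -rcons_cons rcons_uniq ny uq.
  by rewrite rcons_path pq Ty.
by move: sd; rewrite /= size_rcons; lia.
Qed.

Lemma acyclic_has_leaf m (T : rel 'I_m.+1) : irreflexive T ->
  acyclic_graph T -> exists v, forall x y, T v x -> T v y -> x = y.
Proof.
move=> Ti Ta; have [x [q [uq pq maxq]]] := exists_maximal_path T.
case/lastP: q uq pq maxq => [|r y] uq pq maxq.
  by exists x => y ? Txy; have := maxq _ Txy; rewrite inE => /eqP e; rewrite e Ti in Txy.
exists y; suff nb y2 : T y y2 -> y2 = last x (x :: r) by move=> ? ? /nb -> /nb ->.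
rewrite last_rcons in maxq => Ty2.
have y2r : y2 \in x :: r.
  have := maxq _ Ty2; rewrite -rcons_cons mem_rcons in_cons => /orP [/eqP e|//].
  by rewrite e Ti in Ty2.
have sr : sorted T (rcons (x :: r) y) by [].
rewrite -rcons_cons in uq; move: (x :: r) y2r sr uq => r1.
case/splitPr=> p1 [|a p2]; first by rewrite last_cat.
rewrite rcons_cat => /cat_sorted2 [_ pth].
rewrite cat_uniq => /and3P [_ _ uc]; have /negP [] := Ta _ uc ltac:(by rewrite size_rcons).
by rewrite rcons_cons /cycle rcons_path last_rcons Ty2 andbT.
Qed.

Lemma isolated_vertex_step m (T : rel 'I_m.+1) (v : 'I_m.+1) n K :
  symmetric T -> (forall x, ~~ T v x) ->
  forces K [::] (builder_has_won (remove_vertex T v) (@complete_rel n)) ->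
  forces K [::] (builder_has_won T (@complete_rel n)).
Proof.
move=> Tsym isolated /forces_bounded [B HB].
apply: forces_weaken (forces_scaled_copy 0 [::] (ltn0Sn 1) HB) _.
move=> s _ [blue|[f [fi fB fE]]]; first by right.
have [lo' [_ _ _ extends]] := scaled_copy_extends Tsym (ltn0Sn 1) fi fB fE.
left; apply: (extends lo'.+1) => [||j] //; first by rewrite addn2 !ltnSn.
by rewrite (negbTE (isolated _)).
Qed.

Section LeafRounds.

Variables (m n K B : nat) (T : rel 'I_m.+1) (v : 'I_m.+1) (u : 'I_m).
Hypotheses (Tsym : symmetric T) (leaf : forall j, T v (lift v j) -> j = u).
Hypothesis HB :
  forces_below B K [::] (builder_has_won (remove_vertex T v) (@complete_rel n)).

Local Notation won := (builder_has_won T (@complete_rel n)).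

Definition pending (s : board) lo len w : Prop :=
  forall x (s' : board), lo < x < lo + len -> {subset s <= s'} ->
    colored s' true w x -> contains_copy T true s'.

(* [W] is a blue clique of candidates, each the image of [u] in a red copy of
   [T] minus the leaf [v] that any red edge into the window [(lo, lo + len)]
   completes to a red copy of [T]. *)
Definition round_state (s : board) (W : seq nat) lo len : Prop :=
  [/\ uniq W, {in W &, forall a b, a != b -> colored s false a b},
      {in W, forall w, ~~ (lo < w < lo + len)} & {in W, forall w, pending s lo len w}].

Lemma round_state_shrink s s' W lo len lo' len' :
  {subset s <= s'} -> lo <= lo' -> lo' + len' <= lo + len ->
  round_state s W lo len -> round_state s' W lo' len'.
Proof.
move=> ss' lolo' len'len [uW Wb Wout Wp]; split=> // [a b aW bW ab|w wW|w wW].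
- exact/ss'/Wb.
- by apply: contra (Wout w wW) => /andP [] *; lia.
- move=> x s'' /andP [lo'x xlen'] s's'' red.
  by apply: (Wp w wW x) => [|y /ss' /s's''|//]; first lia.
Qed.

Lemma round_state_cons s W lo len w :
  round_state s W lo len -> w \notin W -> {in W, forall w', colored s false w w'} ->
  ~~ (lo < w < lo + len) -> pending s lo len w -> round_state s (w :: W) lo len.
Proof.
move=> [uW Wb Wout Wp] wW blue wout wp; split.
- by rewrite /= wW.
- move=> a b; rewrite !in_cons => /orP [/eqP ->|aW] /orP [/eqP ->|bW];
    rewrite ?eqxx // => ab; [exact: blue|rewrite coloredC; exact: blue|exact: Wb].
- by move=> a; rewrite in_cons => /orP [/eqP ->|/Wout].
- by move=> a; rewrite in_cons => /orP [/eqP ->|/Wp].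
Qed.

(* One round: Builder builds a red copy of [T] minus [v] at scale [S] inside
   the window, whose gap for [v] becomes the new window, and then joins the
   image of [u] to all earlier candidates. *)
Lemma round_step s W lo S : 0 < S -> round_state s W lo ((B + m).+1 * S) ->
  forces (K + size W) s (fun s' => won s' \/ exists w lo', round_state s' (w :: W) lo' S).
Proof.
move=> S0 st; have [_ _ Wout Wp] := st.
apply: forces_bind (forces_scaled_copy lo s S0 HB) _ => s1 ss1 [blue|[f [fi fB fE]]].
  by apply: forces_now; left; right.
have [lo' [lolo' lo'B avoid extends]] := scaled_copy_extends Tsym S0 fi fB fE.
set w := scale lo S (f u).
have w_in : lo < w < lo + (B + m).+1 * S by have := fB u; rewrite /w /scale; nia.
have wW : w \notin W by apply: contraL w_in => /Wout.
apply: forces_weaken (forces_query_star (Q := won) wW _) _.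
  move=> w' s' w'W s1s' red; left; apply: (Wp w' w'W w s') => //.
    by move=> x /ss1 /s1s'.
  by rewrite coloredC.
move=> s2 s1s2 [|blue]; [by left|right; exists w, lo'].
apply: round_state_cons => //.
- by apply: round_state_shrink st => // x /ss1 /s1s2.
- exact: avoid.
- move=> x s' xw s2s'; rewrite /w => red; apply: extends xw _ _ => [y /s1s2 /s2s' //|j].
  by move=> /leaf ->.
Qed.

Lemma forces_rounds r s W lo : size W + r = n ->
  round_state s W lo ((B + m).+1 ^ r) -> forces (r * (K + n)) s won.
Proof.
elim: r s W lo => [|r IH] s W lo sW st.
  have [uW Wb _ _] := st; apply: forces_now; right.
  by apply: blue_clique_copy uW _ Wb; rewrite -sW addn0.
have S0 : 0 < (B + m).+1 ^ r by rewrite expn_gt0.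
rewrite expnS in st; have Wn : size W <= n by rewrite -sW leq_addr.
apply: forces_leq (forces_bind (k' := r * (K + n)) (round_step S0 st) _).
  by rewrite mulSn; lia.
move=> s' _ [|[w [lo' st']]]; first exact: forces_now.
by apply: IH st'; rewrite /= addSnnS.
Qed.

Lemma leaf_rounds : forces (n * (K + n)) [::] won.
Proof. by apply: (forces_rounds (r := n) (W := [::]) (lo := 0)) => //; split. Qed.

End LeafRounds.

Lemma acyclic_forces m (T : rel 'I_m) : symmetric T -> irreflexive T -> acyclic_graph T ->
  exists C, forall n, 0 < n -> forces (C * n ^ m) [::] (builder_has_won T (@complete_rel n)).
Proof.
elim: m T => [|m IH] T Ts Ti Ta.
  by exists 0 => n _; apply: forces_now; left; exists (fun=> 0); split=> -[].
have [v leafv] := acyclic_has_leaf Ti Ta.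
have [C HC] := IH (remove_vertex T v) (fun i j => Ts _ _) (fun i => Ti _)
                  (acyclic_remove_vertex v Ta).
exists C.+1 => n n0; have /forces_bounded [B HB] := HC n n0.
case: (pickP (T v)) => [x Tvx|isolated]; last first.
  apply: forces_leq (isolated_vertex_step Ts (fun x => negbT (isolated x)) (HC n n0)).
  by rewrite expnS; nia.
have vx : v != x by apply: contraTneq Tvx => <-; rewrite Ti.
have [u xu _] := unlift_some vx; rewrite {}xu in Tvx.
have leaf j : T v (lift v j) -> j = u by move/(leafv _ _ Tvx)/lift_inj.
apply: forces_leq (leaf_rounds Ts leaf HB).
have : n <= n ^ m.
  by rewrite -{1}(expn1 n) leq_pexp2l // (leq_ltn_trans (leq0n u) (ltn_ord u)).
by rewrite expnS; nia.
Qed.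

Theorem theorem5 (l : nat) (T : rel 'I_l) :
  2 <= l -> symmetric T -> irreflexive T -> is_tree T ->
  exists C : nat, forall n : nat, 1 <= n ->
    @online_ordered_ramsey_le l T n (@complete_rel n) (C * n ^ l).
Proof.
move=> _ Ts Ti [_ Ta]; have [C HC] := acyclic_forces Ts Ti Ta.
by exists C => n n1; apply: forces_builder_wins; apply: HC.
Qed.
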